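(* Let $p$ be an odd prime, $n$ a positive integer, $q=p^n$, and let $f$ be a planar function on $\mathbb F_{q^2}$. Let $\theta\in\mathbb F_{q^2}^*$ be such that $\theta^{q+1}$ is a nonsquare in $\mathbb F_q$, and assume that for every $c\in\mathbb F_{q^2}$, \[\#\{x\in\mathbb F_{q^2}:f(x)=c\}=\#\{y\in\mathbb F_{q^2}:y^2=c\}.\] Then the set $\mathcal U_\theta:=\{(x,t\theta):x\in\mathbb F_{q^2},t\in\mathbb F_q\}\cup\{(\infty)\}$ is a unital in $\Pi(f)$. Furthermore, for such $\theta$, $\mathcal U_\theta$ is a unital in $\Pi(f)$ for each of the following planar functions $f$ on $\mathbb F_{q^2}$: (a) $f(x)=x^2$; (b) $f(x)=x^{p^k+1}$, where $k$ is an integer with $1\le k\le n$ and $2n/\gcd(2n,k)$ odd; (c) $f(x)=x^{(3^k+1)/2}$, where $p=3$ and $\gcd(k,2n)=1$.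
   Context: A function $f:\mathbb F_{q^2}\to\mathbb F_{q^2}$ is planar if for every $a\neq 0$ the map $x\mapsto f(x+a)-f(x)$ is a bijection. For planar $f$, $\Pi(f)$ is the projective plane with points $(x,y)\in\mathbb F_{q^2}^2$ and $(a)$ for $a\in\mathbb F_{q^2}\cup\{\infty\}$, and lines $L_{a,b}=\{(x,f(x+a)-b):x\in\mathbb F_{q^2}\}\cup\{(a)\}$ ($a,b\in\mathbb F_{q^2}$), $N_a=\{(a,y):y\in\mathbb F_{q^2}\}\cup\{(\infty)\}$ ($a\in\mathbb F_{q^2}$), $L_\infty=\{(a):a\in\mathbb F_{q^2}\cup\{\infty\}\}$, incidence being membership. A unital in $\Pi(f)$ is a set of $q^3+1$ points meeting every line in exactly $1$ or $q+1$ points. *)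

From HB Require Import structures.
From mathcomp Require Import all_boot all_order all_algebra all_field.
Set Implicit Arguments. Unset Strict Implicit. Unset Printing Implicit Defensive.
Import GRing.Theory.
Local Open Scope ring_scope.

Section Plane.
Variable F : finFieldType.

Definition planar (f : F -> F) : Prop :=
  forall a : F, a != 0 -> bijective (fun x => f (x + a) - f x).

(* Points of Pi(f): inl (x,y) = affine point (x,y); inr (Some a) = (a);
   inr None = (infinity). *)
Definition point := ((F * F) + option F)%type.
(* Lines of Pi(f): inl (a,b) = L_{a,b}; inr (Some a) = N_a; inr None = L_infinity. *)
Definition line := ((F * F) + option F)%type.

Definition incident (f : F -> F) (P : point) (L : line) : bool :=
  match L with
  | inl (a, b) =>
      match P with
      | inl (x, y) => y == f (x + a) - b
      | inr (Some a') => a' == a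
      | inr None => false
      end
  | inr (Some a) =>
      match P with
      | inl (x, _) => x == a
      | inr None => true
      | inr (Some _) => false
      end
  | inr None =>
      match P with
      | inl _ => false
      | inr _ => true
      end
  end.

Definition unital (q : nat) (f : F -> F) (U : {set point}) : Prop :=
  #|U| = (q ^ 3).+1 /\
  forall L : line, #|[set P in U | incident f P L]| \in [:: 1%N; q.+1].

Definition subF (q : nat) : {set F} := [set x : F | x ^+ q == x].

Definition U_theta (q : nat) (theta : F) : {set point} :=
  [set P : point |
    match P with
    | inl (x, y) => [exists t in subF q, y == t * theta]
    | inr None => true
    | inr (Some _) => false
    end].

End Plane.

From HB Require Import structures.
From mathcomp Require Import all_boot all_order all_algebra all_field.
From mathcomp Require Import zify ring.
Set Implicit Arguments. Unset Strict Implicit. Unset Printing Implicit Defensive.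
Import GRing.Theory.

(* Write K = F_q and N(x) = x^(q+1).  The set U_theta meets each vertical
   line N_a in q+1 points and L_infinity in one point, while it meets L_{a,b}
   in #{x | f(x+a) - b \in theta K} points; this number only depends on the
   fiber sizes of f, so we may replace f by squaring.  For g = theta^((q-1)/2)
   we have g^2 = theta^(q-1), and g^(q+1) = -1 because N(theta) is a nonsquare
   in K.  Then y^2 - b \in theta K iff N(y^q + g y) = g b + (g b)^q, where
   y |-> y^q + g y is a bijection and N takes each value of K exactly 1 (at 0)
   or q+1 times.  In cases (b) and (c) the power map is x |-> (x^u)^2 with
   x |-> x^u a permutation of F, so it has the fiber sizes of squaring. *)

Section Arithmetic.
Local Open Scope nat_scope.

Lemma gcdn_mul2_dvdn (n k : nat) : 0 < n -> odd (2 * n %/ gcdn (2 * n) k) ->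
  gcdn (2 * k) (2 * n) %| k.
Proof.
move=> n_gt0; set g := gcdn (2 * n) k; set o := 2 * n %/ g => odd_o.
have g_gt0 : 0 < g by rewrite gcdn_gt0 muln_gt0 n_gt0.
have def2n : 2 * n = g * o by rewrite /o [g * _]mulnC divnK ?dvdn_gcdl.
have /dvdnP[e defD] : g %| gcdn (2 * k) (2 * n).
  by rewrite dvdn_gcd dvdn_mull ?dvdn_gcdr ?dvdn_gcdl.
have e_dvd2 : e %| 2.
  have : gcdn (2 * k) (2 * n) %| 2 * g.
    by rewrite /g muln_gcdr dvdn_gcd dvdn_mull ?dvdn_gcdr ?dvdn_gcdl.
  by rewrite defD dvdn_pmul2r.
have e_dvd_o : e %| o.
  have : gcdn (2 * k) (2 * n) %| g * o by rewrite -def2n dvdn_gcdr.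
  by rewrite defD mulnC dvdn_pmul2l.
have e1 : e = 1.
  have /eqP co2 : coprime 2 o by rewrite coprime2n.
  by apply/eqP; rewrite -dvdn1 -co2 dvdn_gcd e_dvd2.
by rewrite defD e1 mul1n dvdn_gcdr.
Qed.

Lemma expn_even_succ (p k : nat) : odd p -> ~~ odd k ->
  exists2 u, (p ^ k).+1 = 2 * u & odd u.
Proof.
move=> odd_p even_k; have [h ->] : exists h, k = 2 * h.
  by exists k./2; rewrite -[k in LHS]odd_double_half (negbTE even_k) -muln2 mulnC.
have [j def_s] : exists j, p ^ h = 2 * j + 1.
  exists (p ^ h)./2; rewrite -[LHS]odd_double_half oddX odd_p orbT.
  by rewrite -muln2 mulnC addnC.
exists (2 * (j * j + j) + 1); first by rewrite mulnC expnM def_s; nia.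
by rewrite addn1 /= oddM.
Qed.

Lemma expn3_odd_succ (k : nat) : odd k -> exists2 u, (3 ^ k).+1 = 4 * u & odd u.
Proof.
move=> odd_k; have [h ->] : exists h, k = 2 * h + 1.
  by exists k./2; rewrite -[k in LHS]odd_double_half odd_k -muln2 mulnC addnC.
have [t def9] : exists t, 9 ^ h = 8 * t + 1.
  elim: h => [|h [t ht]]; first by exists 0.
  by exists (9 * t + 1); rewrite expnS ht; lia.
exists (6 * t + 1); first by rewrite expnD expnM def9; lia.
by rewrite addn1 /= oddM.
Qed.

End Arithmetic.

Local Open Scope ring_scope.

Section Exponents.
Variable R : nzRingType.
Implicit Types z : R.

Lemma expr_gcdn_eq1 z (a b : nat) : (0 < a)%N -> z ^+ a = 1 -> z ^+ b = 1 ->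
  z ^+ gcdn a b = 1.
Proof.
move=> a_gt0 za zb; have [x _ /dvdnP[c def_c]] := Bezoutl b a_gt0.
have : z ^+ (gcdn a b + x * b) = 1 by rewrite def_c mulnC exprM za expr1n.
by rewrite exprD mulnC exprM zb expr1n mulr1.
Qed.

Lemma expr_expn_fixedM z (r a c : nat) : z ^+ (r ^ a) = z -> z ^+ (r ^ (a * c)) = z.
Proof.
move=> fix_z; elim: c => [|c IHc]; first by rewrite muln0 expn0 expr1.
by rewrite mulnS expnD exprM fix_z IHc.
Qed.

Lemma expr_expn_fixed_gcdn z (r a b : nat) : (0 < a)%N ->
  z ^+ (r ^ a) = z -> z ^+ (r ^ b) = z -> z ^+ (r ^ gcdn a b) = z.
Proof.
move=> a_gt0 za zb; have [x _ /dvdnP[c def_c]] := Bezoutl b a_gt0.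
have : z ^+ (r ^ (gcdn a b + x * b)) = z by rewrite def_c mulnC expr_expn_fixedM.
by rewrite expnD mulnC exprM (mulnC x) expr_expn_fixedM.
Qed.

End Exponents.

Section FieldExponents.
Variable F : fieldType.
Implicit Types x y z : F.

Lemma expr_succ_eq1_fixed z (r : nat) : z ^+ r.+1 = 1 -> z ^+ (r ^ 2) = z.
Proof.
move=> zr1; have z0 : z != 0.
  by apply: contra_eq_neq zr1 => ->; rewrite expr0n eq_sym oner_neq0.
have zr : z ^+ r = z^-1 by apply: (mulIf z0); rewrite -exprSr zr1 mulVf.
by rewrite expnS expn1 exprM zr exprVn zr invrK.
Qed.

Lemma expr_inj (u : nat) : (0 < u)%N -> (forall z, z ^+ u = 1 -> z = 1) ->
  injective (fun x => x ^+ u).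
Proof.
move=> u_gt0 root1 x y /= exy; have [y0|y0] := eqVneq y 0.
  by apply/eqP; move: exy; rewrite y0 expr0n gtn_eqF // => /eqP; rewrite expf_eq0 u_gt0.
have : (x / y) ^+ u = 1 by rewrite exprMn exprVn exy mulfV ?expf_neq0.
by move/root1 => xy1; apply: (mulIf (invr_neq0 y0)); rewrite xy1 mulfV.
Qed.

End FieldExponents.

Lemma card_sum_set {T U : finType} (B : {set T + U}) :
  #|B| = (#|[set z | inl z \in B]| + #|[set w | inr w \in B]|)%N.
Proof.
by rewrite -!sum1_card big_sumType; congr (_ + _)%N; apply: eq_bigl => z; rewrite inE.
Qed.

Lemma card_graph {T U : finType} (h : T -> U) (X : pred T) :
  #|[set z : T * U | (z.2 == h z.1) && X z.1]| = #|[set x | X x]|.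
Proof.
have -> : [set z : T * U | (z.2 == h z.1) && X z.1] = (fun x => (x, h x)) @: [set x | X x].
  apply/setP => -[x y]; rewrite inE /=.
  apply/idP/imsetP => [/andP[/eqP -> Xx]|[x' Xx' [-> ->]]]; first by exists x; rewrite ?inE.
  by rewrite inE in Xx'; rewrite eqxx.
by rewrite card_imset // => x1 x2 [].
Qed.

Lemma card_preim_eq_fibers {T U : finType} (f g : T -> U) (Q : pred U) :
  (forall c, #|[set x | f x == c]| = #|[set y | g y == c]|) ->
  #|[set x | Q (f x)]| = #|[set y | Q (g y)]|.
Proof.
have sum_fibers (h : T -> U) : #|[set x | Q (h x)]| = (\sum_(c | Q c) #|[set x | h x == c]|)%N.
  rewrite -sum1_card (partition_big h Q) /= => [|x]; last by rewrite inE.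
  apply: eq_bigr => c Qc; rewrite -sum1_card; apply: eq_bigl => x; rewrite !inE.
  by case: eqP => [->|]; rewrite ?andbF ?Qc.
by move=> eq_fib; rewrite !sum_fibers; apply: eq_bigr.
Qed.

Lemma card_fiber_comp_inj {T U : finType} (g : T -> U) (h : T -> T) (c : U) : injective h ->
  #|[set x | g (h x) == c]| = #|[set y | g y == c]|.
Proof.
move=> inj_h; rewrite -[RHS](card_preimset _ inj_h).
by apply: eq_card => x; rewrite !inE.
Qed.

Section FiniteFieldRoots.
Variable F : finFieldType.

Lemma card_expr_eq_le (m : nat) (c : F) : (0 < m)%N -> (#|[set x : F | x ^+ m == c]| <= m)%N.
Proof.
move=> m_gt0; rewrite cardE -ltnS -(size_XnsubC c m_gt0); apply: max_poly_roots.
- by rewrite -size_poly_eq0 size_XnsubC.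
- by apply/allP => x; rewrite mem_enum inE => /eqP xm; rewrite rootE !hornerE xm subrr.
- exact: enum_uniq.
Qed.

(* Pigeonhole: the fibers of [x |-> x ^+ m] over the [l]-th roots of unity
   have at most [m] elements, there are at most [l] of them, and they cover [D]. *)
Lemma card_expr_fibers (D : {set F}) (m l : nat) : (0 < m)%N -> (0 < l)%N ->
  #|D| = (m * l)%N -> (forall x, x \in D -> (x ^+ m) ^+ l = 1) ->
  #|[set a : F | a ^+ l == 1]| = l /\
  forall a : F, a ^+ l = 1 -> #|[set x in D | x ^+ m == a]| = m.
Proof.
move=> m_gt0 l_gt0 cardD Dl.
set R := [set a : F | a ^+ l == 1]; set fib := fun a => #|[set x in D | x ^+ m == a]|.
have cardR : (#|R| <= l)%N by apply: card_expr_eq_le.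
have fib_le a : (fib a <= m)%N.
  apply: leq_trans (card_expr_eq_le a m_gt0); apply: subset_leq_card.
  by apply/subsetP => x; rewrite !inE => /andP[].
have sum_fib : (\sum_(a in R) fib a)%N = (m * l)%N.
  rewrite -cardD -sum1_card [RHS](partition_big (fun x => x ^+ m) (mem R)) => [|x /Dl].
    by apply: eq_bigr => a _; rewrite /fib -sum1_card; apply: eq_bigl => x; rewrite !inE.
  by rewrite /= inE => ->.
have fibs := leqif_sum (fun b (_ : b \in R) => leqif_eq (fib_le b)).
rewrite sum_fib sum_nat_const in fibs.
have cardR_eq : #|R| = l.
  by apply/eqP; rewrite eqn_leq cardR -(leq_pmul2r m_gt0) mulnC fibs.1.
have /forallP all_m : [forall (b | b \in R), fib b == m].
  by rewrite -fibs.2 cardR_eq mulnC.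
split=> // a al1.
by have := all_m a; rewrite inE al1 eqxx => /eqP.
Qed.

End FiniteFieldRoots.

Section UnitalTheta.
Variables (F : finFieldType) (p n : nat).
Hypotheses (p_prime : prime p) (p_odd : odd p) (n_gt0 : (0 < n)%N).
Hypothesis cardF : #|F| = ((p ^ n) ^ 2)%N.
Local Notation q := (p ^ n)%N.
Implicit Types x y z w a b g th : F.

Lemma q_gt1 : (1 < q)%N.
Proof. by rewrite -(expn0 p) ltn_exp2l ?prime_gt1. Qed.

Lemma q_odd : odd q.
Proof. by rewrite oddX p_odd orbT. Qed.

Lemma pcharF : p \in [pchar F].
Proof. by apply: (@card_finPcharP F p (n * 2)); rewrite // cardF expnM. Qed.

Lemma pnat_q : [pchar F].-nat q.
Proof. by rewrite pnatX (pnatE _ p_prime) pcharF. Qed.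

Lemma frobD x y : (x + y) ^+ q = x ^+ q + y ^+ q.
Proof. exact: exprDn_pchar pnat_q. Qed.

Lemma frobB x y : (x - y) ^+ q = x ^+ q - y ^+ q.
Proof. by rewrite frobD exprNn_pchar ?pnat_q. Qed.

Lemma exprqK x : (x ^+ q) ^+ q = x.
Proof. by rewrite -exprM mulnn -cardF expf_card. Qed.

Lemma oppr1_neq1 : (-1 : F) != 1.
Proof.
apply/eqP => m1_1; have p_dvd2 : (p %| 2)%N.
  by rewrite (dvdn_pcharf pcharF) -[2%N]/(1 + 1)%N natrD -{1}m1_1 addNr.
have p_le2 := dvdn_leq (isT : (0 < 2)%N) p_dvd2; have p_gt1 := prime_gt1 p_prime.
have p2 : p = 2%N by lia.
by move: p_odd; rewrite p2.
Qed.

Lemma expr_q_pred x : x ^+ q = x ^+ q.-1 * x.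
Proof. by rewrite -exprSr prednK // ltnW // q_gt1. Qed.

Lemma expr_unit_card x : x != 0 -> x ^+ (q.+1 * q.-1) = 1.
Proof.
move=> x0; apply: (mulIf x0); rewrite mul1r -exprSr.
have -> : ((q.+1 * q.-1).+1 = q * q)%N by have := q_gt1; lia.
by rewrite exprM exprqK.
Qed.

Lemma card_norm_fibers :
  #|[set a : F | a ^+ q.-1 == 1]| = q.-1 /\
  forall a, a ^+ q.-1 = 1 -> #|[set x in [set~ 0] | x ^+ q.+1 == a]| = q.+1.
Proof.
have q_gt1 := q_gt1.
apply: card_expr_fibers; rewrite ?ltn_predRL //.
- by rewrite cardsC1 cardF; lia.
- by move=> x; rewrite !inE => x0; rewrite -exprM expr_unit_card.
Qed.

Lemma mem_subF x : x != 0 -> (x \in subF F q) = (x ^+ q.-1 == 1).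
Proof.
move=> x0; rewrite inE.
by rewrite expr_q_pred -[X in _ == X]mul1r (inj_eq (mulIf x0)).
Qed.

Lemma card_subF : #|subF F q| = q.
Proof.
have -> : subF F q = 0 |: [set a : F | a ^+ q.-1 == 1].
  apply/setP => x; rewrite !inE; have [->|x0] := eqVneq x 0.
    by rewrite expr0n gtn_eqF ?eqxx // ltnW // q_gt1.
  by rewrite -mem_subF // inE.
rewrite cardsU1 (proj1 card_norm_fibers) inE expr0n.
by have := q_gt1; case: q => [|[|m]] //= _; rewrite eq_sym oner_eq0.
Qed.

Lemma double_half_q : (2 * q.-1./2)%N = q.-1.
Proof.
rewrite mul2n -[RHS]odd_double_half.
by have := q_odd; have := q_gt1; case: q => [|m] //= _ /negbTE ->.
Qed.

(* Euler's criterion in F_q: the squaring map is 2-to-1 from F_q^* onto the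
   roots of x^((q-1)/2) = 1. *)
Lemma subF_square a : a ^+ q.-1./2 = 1 ->
  exists2 t, t \in subF F q & t ^+ 2 = a.
Proof.
move=> a_half; set Kx := [set x : F | x ^+ q.-1 == 1].
have half_gt0 : (0 < q.-1./2)%N by have := q_gt1; have := double_half_q; lia.
have cardKx : #|Kx| = (2 * q.-1./2)%N by rewrite (proj1 card_norm_fibers) double_half_q.
have Kx_half x : x \in Kx -> (x ^+ 2) ^+ q.-1./2 = 1.
  by rewrite inE -exprM double_half_q => /eqP.
have [_ sq_fibers] := card_expr_fibers (isT : (0 < 2)%N) half_gt0 cardKx Kx_half.
have /card_gt0P[t] : (0 < #|[set x in Kx | x ^+ 2 == a]|)%N by rewrite sq_fibers.
rewrite !inE => /andP[t_unit /eqP t2]; exists t => //.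
rewrite mem_subF //; apply: contraTneq t_unit => ->.
by rewrite expr0n gtn_eqF ?ltn_predRL ?q_gt1 // eq_sym oner_eq0.
Qed.

Lemma norm_half_nonsquare th : th != 0 ->
  ~ (exists2 t, t \in subF F q & t ^+ 2 = th ^+ q.+1) ->
  (th ^+ q.-1./2) ^+ q.+1 = -1.
Proof.
move=> th0 nonsq; rewrite exprAC.
have : (th ^+ q.+1 ^+ q.-1./2) ^+ 2 = 1.
  by rewrite -!exprM [(q.-1./2 * 2)%N]mulnC double_half_q expr_unit_card.
move/eqP; rewrite sqrf_eq1 => /orP[/eqP half1|/eqP //].
by case: nonsq; exact: subF_square.
Qed.

Definition scaled_subF th : {set F} := [set y | [exists t in subF F q, y == t * th]].

Lemma mem_scaled_subF th w : th != 0 -> (w \in scaled_subF th) = (th ^+ q * w == th * w ^+ q).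
Proof.
move=> th0; rewrite inE; apply/existsP/eqP => [[t /andP[Kt /eqP ->]]|thw].
  by move: Kt; rewrite inE => /eqP tq; rewrite exprMn tq; ring.
have thq0 : th ^+ q != 0 by rewrite expf_neq0.
exists (w / th); rewrite divfK // eqxx andbT inE exprMn exprVn.
have -> : w ^+ q = th ^+ q * w / th by rewrite thw; field.
by apply/eqP; field; rewrite th0 thq0.
Qed.

Lemma card_scaled_subF th : th != 0 -> #|scaled_subF th| = q.
Proof.
move=> th0; have -> : scaled_subF th = [set t * th | t in subF F q].
  apply/setP => y; rewrite inE; apply/existsP/imsetP => [[t /andP[Kt /eqP ->]]|[t Kt ->]].
    by exists t.
  by exists t; rewrite Kt eqxx.
by rewrite card_imset ?card_subF //; exact: mulIf.
Qed.

(* A nonzero root d of d^q + g d would give 1 = (d^(q-1))^(q+1) = (-g)^(q+1) = -1. *)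
Lemma frob_add_mul_inj g : g ^+ q.+1 = -1 -> injective (fun y => y ^+ q + g * y).
Proof.
move=> gq1 y1 y2 /= eq_y; apply/eqP; rewrite -subr_eq0; set d := y1 - y2.
have d_root : d ^+ q + g * d = 0 by rewrite /d frobB mulrBr addrACA eq_y -opprD subrr.
apply/negPn/negP => d0.
have dq1 : d ^+ q.-1 = - g.
  apply: (mulIf d0); rewrite -expr_q_pred mulNr.
  by apply/eqP; rewrite -addr_eq0 d_root.
have := expr_unit_card d0; rewrite mulnC exprM dq1 exprS exprNn_pchar ?pnat_q // mulrNN.
rewrite -exprS gq1.
by move/eqP; rewrite (negbTE oppr1_neq1).
Qed.

Lemma card_norm_eq e : e \in subF F q -> #|[set w : F | w ^+ q.+1 == e]| \in [:: 1%N; q.+1].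
Proof.
move=> Ke; have [->|e0] := eqVneq e 0.
  suff -> : [set w : F | w ^+ q.+1 == 0] = [set 0] by rewrite cards1.
  by apply/setP => w; rewrite !inE expf_eq0.
suff -> : [set w : F | w ^+ q.+1 == e] = [set x in [set~ 0] | x ^+ q.+1 == e].
  by rewrite (proj2 card_norm_fibers) ?mem_seq2 ?eqxx ?orbT //; apply/eqP; rewrite -mem_subF.
apply/setP => w; rewrite !inE; have [->|//] := eqVneq w 0.
by rewrite expr0n /= eq_sym (negbTE e0).
Qed.

(* As g^q = -g^-1, (y^q + g y)^(q+1) = g y^2 - g^-1 y^(2q), whereas membership
   in th F_q reads g^2 (y^2 - b) = (y^2 - b)^q. *)
Lemma mem_scaled_subF_norm th g b y : th != 0 -> g ^+ 2 = th ^+ q.-1 -> g ^+ q.+1 = -1 ->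
  (y ^+ 2 - b \in scaled_subF th) = ((y ^+ q + g * y) ^+ q.+1 == g * b + (g * b) ^+ q).
Proof.
move=> th0 g2 gq1; have g0 : g != 0.
  by apply: contra_eq_neq gq1 => ->; rewrite expr0n /= eq_sym oppr_eq0 oner_eq0.
have gq : g ^+ q = - g^-1 by apply: (mulfI g0); rewrite -exprS gq1 mulrN mulfV.
have thq : th ^+ q = g ^+ 2 * th by rewrite g2 -expr_q_pred.
rewrite mem_scaled_subF // thq frobB exprAC [(_ + _) ^+ q.+1]exprS frobD !exprMn exprqK gq.
move: (y ^+ q) (b ^+ q) => yq bq; rewrite -subr_eq0 -[RHS]subr_eq0.
have -> : g ^+ 2 * th * (y ^+ 2 - b) - th * (yq ^+ 2 - bq) =
    th * g * ((yq + g * y) * (y + - g^-1 * yq) - (g * b + - g^-1 * bq)) by field.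
by rewrite !mulf_eq0 (negbTE th0) (negbTE g0).
Qed.

Lemma card_square_shift th b : th != 0 ->
  ~ (exists2 t, t \in subF F q & t ^+ 2 = th ^+ q.+1) ->
  #|[set y | y ^+ 2 - b \in scaled_subF th]| \in [:: 1%N; q.+1].
Proof.
move=> th0 nonsq; set g := th ^+ q.-1./2.
have g2 : g ^+ 2 = th ^+ q.-1 by rewrite -exprM mulnC double_half_q.
have gq1 : g ^+ q.+1 = -1 by exact: norm_half_nonsquare.
have -> : [set y | y ^+ 2 - b \in scaled_subF th] =
    (fun y => y ^+ q + g * y) @^-1: [set w | w ^+ q.+1 == g * b + (g * b) ^+ q].
  by apply/setP => y; rewrite [LHS]inE (mem_scaled_subF_norm _ _ th0 g2 gq1) !inE.
rewrite card_preimset; last exact: frob_add_mul_inj.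
by apply: card_norm_eq; rewrite inE frobD exprqK addrC.
Qed.

Lemma card_U_theta th : th != 0 -> #|U_theta q th| = (q ^ 3).+1.
Proof.
move=> th0; rewrite card_sum_set.
have -> : [set z | inl z \in U_theta q th] = setX [set: F] (scaled_subF th).
  by apply/setP => -[x y]; rewrite !inE.
have -> : [set w | inr w \in U_theta q th] = [set None].
  by apply/setP => -[a|]; rewrite !inE.
by rewrite cardsX cardsT cardF card_scaled_subF // cards1 -expnSr addn1.
Qed.

Lemma U_theta_meets_L (f : F -> F) th a b : th != 0 ->
  ~ (exists2 t, t \in subF F q & t ^+ 2 = th ^+ q.+1) ->
  (forall c, #|[set x | f x == c]| = #|[set y | y ^+ 2 == c]|) ->
  #|[set P in U_theta q th | incident f P (inl (a, b))]| \in [:: 1%N; q.+1].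
Proof.
move=> th0 nonsq f_fibers; rewrite card_sum_set.
have -> : [set w | inr w \in [set P in U_theta q th | incident f P (inl (a, b))]] = set0.
  by apply/setP => -[a'|]; rewrite !inE.
have -> : [set z | inl z \in [set P in U_theta q th | incident f P (inl (a, b))]] =
    [set z : F * F | (z.2 == f (z.1 + a) - b) && (f (z.1 + a) - b \in scaled_subF th)].
  by apply/setP => -[x y]; rewrite !inE /= andbC; case: eqP => [->|].
rewrite (card_graph (fun x => f (x + a) - b) (fun x => f (x + a) - b \in scaled_subF th)).
have -> : [set x | f (x + a) - b \in scaled_subF th] =
    (fun x => x + a) @^-1: [set x | f x - b \in scaled_subF th].
  by apply/setP => x; rewrite !inE.
rewrite card_preimset ?cards0 ?addn0; last exact: addIr.
rewrite (card_preim_eq_fibers (fun c => c - b \in scaled_subF th) f_fibers).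
exact: card_square_shift.
Qed.

Lemma U_theta_meets_N (f : F -> F) th a : th != 0 ->
  #|[set P in U_theta q th | incident f P (inr (Some a))]| = q.+1.
Proof.
move=> th0; rewrite card_sum_set.
have -> : [set z | inl z \in [set P in U_theta q th | incident f P (inr (Some a))]] =
    setX [set a] (scaled_subF th).
  by apply/setP => -[x y]; rewrite !inE /= andbC.
have -> : [set w | inr w \in [set P in U_theta q th | incident f P (inr (Some a))]] = [set None].
  by apply/setP => -[a'|]; rewrite !inE.
by rewrite cardsX !cards1 card_scaled_subF // mul1n addn1.
Qed.

Lemma U_theta_meets_Linf (f : F -> F) th :
  #|[set P in U_theta q th | incident f P (inr None)]| = 1%N.
Proof.
rewrite card_sum_set.
have -> : [set z | inl z \in [set P in U_theta q th | incident f P (inr None)]] = set0.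
  by apply/setP => -[x y]; rewrite !inE andbF.
have -> : [set w | inr w \in [set P in U_theta q th | incident f P (inr None)]] = [set None].
  by apply/setP => -[a'|]; rewrite !inE.
by rewrite cards0 cards1.
Qed.

Lemma unital_U_theta (f : F -> F) th : th != 0 ->
  ~ (exists2 t, t \in subF F q & t ^+ 2 = th ^+ q.+1) ->
  (forall c, #|[set x | f x == c]| = #|[set y | y ^+ 2 == c]|) ->
  unital q f (U_theta q th).
Proof.
move=> th0 nonsq f_fibers; split=> [|[[a b]|[a|]]]; first exact: card_U_theta.
- exact: U_theta_meets_L.
- by rewrite U_theta_meets_N // mem_seq2 eqxx orbT.
- by rewrite U_theta_meets_Linf.
Qed.

End UnitalTheta.

Section PowerMaps.
Variables (F : finFieldType) (p n : nat).
Hypothesis cardF : #|F| = ((p ^ n) ^ 2)%N.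

Lemma expr_succ_eq1_fixed_gcdn (z : F) (k : nat) : (0 < k)%N ->
  z ^+ (p ^ k).+1 = 1 -> z ^+ (p ^ gcdn (2 * k) (2 * n)) = z.
Proof.
move=> k_gt0 zk1; apply: expr_expn_fixed_gcdn; first by rewrite muln_gt0.
  by rewrite mulnC expnM expr_succ_eq1_fixed.
by rewrite mulnC expnM -cardF expf_card.
Qed.

Lemma square_fibers_expr_double (u : nat) (c : F) : (0 < u)%N ->
  (forall z : F, z ^+ u = 1 -> z = 1) ->
  #|[set x : F | x ^+ (u * 2) == c]| = #|[set y : F | y ^+ 2 == c]|.
Proof.
move=> u_gt0 root1; rewrite -[RHS](card_fiber_comp_inj _ _ (expr_inj u_gt0 root1)).
by apply: eq_card => x; rewrite !inE exprM.
Qed.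

Lemma square_fibers_expr_pk_succ (k : nat) (c : F) : odd p -> (0 < n)%N -> (0 < k)%N ->
  odd (2 * n %/ gcdn (2 * n) k) ->
  #|[set x : F | x ^+ (p ^ k).+1 == c]| = #|[set y : F | y ^+ 2 == c]|.
Proof.
move=> p_odd n_gt0 k_gt0 odd_o; have dvd_k := gcdn_mul2_dvdn n_gt0 odd_o.
have even_k : ~~ odd k.
  by rewrite -dvdn2 (dvdn_trans _ dvd_k) // -muln_gcdr dvdn_mulr.
have [u pk_succ odd_u] := expn_even_succ p_odd even_k.
rewrite pk_succ mulnC; apply: square_fibers_expr_double => [|z zu1]; first exact: odd_gt0.
have zk1 : z ^+ (p ^ k).+1 = 1 by rewrite pk_succ exprM exprAC zu1 expr1n.
have zk : z ^+ (p ^ k) = z.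
  have [m ->] := dvdnP dvd_k.
  by rewrite mulnC expr_expn_fixedM // expr_succ_eq1_fixed_gcdn.
have z2 : z ^+ 2 = 1 by rewrite -zk1 [RHS]exprSr zk.
have := expr_gcdn_eq1 (isT : (0 < 2)%N) z2 zu1.
by have /eqP -> : coprime 2 u by rewrite coprime2n.
Qed.

Lemma square_fibers_expr_3k_succ_half (k : nat) (c : F) : p = 3%N ->
  gcdn k (2 * n) = 1%N ->
  #|[set x : F | x ^+ ((3 ^ k).+1 %/ 2) == c]| = #|[set y : F | y ^+ 2 == c]|.
Proof.
move=> p3 cop_k; have odd_k : odd k.
  apply: contraT => even_k.
  have : (2 %| gcdn k (2 * n))%N by rewrite dvdn_gcd dvdn2 even_k dvdn_mulr.
  by rewrite cop_k.
have [u three_k odd_u] := expn3_odd_succ odd_k.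
have -> : ((3 ^ k).+1 %/ 2 = u * 2)%N.
  by rewrite three_k -[4%N]/(2 * 2)%N -mulnA mulKn // mulnC.
apply: square_fibers_expr_double => [|z zu1]; first exact: odd_gt0.
have zk1 : z ^+ (p ^ k).+1 = 1 by rewrite p3 three_k mulnC exprM zu1 expr1n.
have gcd2 : gcdn (2 * k) (2 * n) = 2%N.
  rewrite -muln_gcdr; apply/eqP; rewrite -[X in _ == X]muln1 eqn_pmul2l //.
  by rewrite -dvdn1 -cop_k dvdn_gcd dvdn_gcdl (dvdn_trans (dvdn_gcdr k n)) ?dvdn_mull.
have z9 : z ^+ (3 ^ 2) = z.
  by have := expr_succ_eq1_fixed_gcdn (odd_gt0 odd_k) zk1; rewrite gcd2 p3.
have z3k : z ^+ (3 ^ k) = z ^+ 3.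
  rewrite -[k]odd_double_half odd_k add1n expnSr exprM -muln2 mulnC.
  by rewrite expr_expn_fixedM.
have z4 : z ^+ 4 = 1 by rewrite -zk1 p3 [RHS]exprSr z3k -exprSr.
have := expr_gcdn_eq1 (isT : (0 < 4)%N) z4 zu1.
by have /eqP -> : coprime 4 u by rewrite -[4%N]/(2 ^ 2)%N coprime_pexpl // coprime2n.
Qed.

End PowerMaps.

Theorem theorem2p4 (F : finFieldType) (p n : nat) (hp : prime p) (hodd : odd p)
  (hn : (0 < n)%N) (hF : #|F| = ((p ^ n) ^ 2)%N)
  (theta : F) (htheta0 : theta != 0)
  (hns : ~ (exists2 t : F, t \in subF F (p ^ n) & t ^+ 2 = theta ^+ (p ^ n).+1)) :
  (forall f : F -> F, planar f ->
     (forall c : F, #|[set x : F | f x == c]| = #|[set y : F | y ^+ 2 == c]|) ->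
     unital (p ^ n) f (U_theta (p ^ n) theta))
  /\ unital (p ^ n) (fun x : F => x ^+ 2) (U_theta (p ^ n) theta)
  /\ (forall k : nat, (1 <= k <= n)%N -> odd ((2 * n) %/ gcdn (2 * n) k) ->
        unital (p ^ n) (fun x : F => x ^+ (p ^ k).+1) (U_theta (p ^ n) theta))
  /\ (p = 3%N -> forall k : nat, gcdn k (2 * n) = 1%N ->
        unital (p ^ n) (fun x : F => x ^+ ((3 ^ k).+1 %/ 2)) (U_theta (p ^ n) theta)).
Proof.
have U f : (forall c : F, #|[set x | f x == c]| = #|[set y | y ^+ 2 == c]|) ->
    unital (p ^ n) f (U_theta (p ^ n) theta).
  exact: unital_U_theta.
split; first by move=> f _; exact: U.
split; first exact: U.
split=> [k /andP[k_gt0 _] odd_o | p3 k cop_k]; apply: U => c.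
  exact (square_fibers_expr_pk_succ hF c hodd hn k_gt0 odd_o).
exact (square_fibers_expr_3k_succ_half hF c p3 cop_k).
Qed.
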